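(* Let $k\ge1$ be the cache size. For any access graph $G$, \[-1+\frac1k\le\mathrm{Min}^G(\mathrm{FIFO},\mathrm{LRU})\quad\text{and}\quad\mathrm{Max}^G(\mathrm{FIFO},\mathrm{LRU})\le\frac12-\frac1{4k-2}.\]
   Context: Paging: a cache holds at most $k$ pages and is initially empty. A request to a page in the cache is a hit; otherwise it is a fault, the page is brought into the cache, evicting a page first if the cache is full. $\mathcal{A}(I)$ is the number of faults of $\mathcal{A}$ on request sequence $I$. LRU evicts the least recently requested cached page; FIFO evicts the cached page that entered the cache earliest. Access graph: a graph $G$ whose vertices are the pages; a request sequence respects $G$ if any two consecutive requests are identical or adjacent in $G$; $L(G)$ is the set of such sequences. Relative interval: $\mathrm{Min}_{\mathcal{A},\mathcal{B}}(n,G)=\min\{\mathcal{A}(I)-\mathcal{B}(I): I\in L(G),|I|=n\}$, $\mathrm{Max}_{\mathcal{A},\mathcal{B}}(n,G)$ analogously with max; $\mathrm{Min}^G(\mathcal{A},\mathcal{B})=\liminf_{n\to\infty}\mathrm{Min}_{\mathcal{A},\mathcal{B}}(n,G)/n$ and $\mathrm{Max}^G(\mathcal{A},\mathcal{B})=\limsup_{n\to\infty}\mathrm{Max}_{\mathcal{A},\mathcal{B}}(n,G)/n$. *)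

From HB Require Import structures.
From mathcomp Require Import all_boot all_order all_algebra.
From mathcomp Require Import all_classical all_reals all_analysis.
Set Implicit Arguments. Unset Strict Implicit. Unset Printing Implicit Defensive.
Import Order.TTheory GRing.Theory Num.Theory.
Local Open Scope classical_set_scope.
Local Open Scope ring_scope.

(* Paging with cache size k.  A cache state is a seq of pages, ordered
   so that the page to be evicted (by the respective policy) is last. *)

Definition lru_step {T : eqType} (k : nat) (c : seq T) (p : T) : seq T * bool :=
  if p \in c then (p :: rem p c, false)
  else if (size c < k)%N then (p :: c, true) else (p :: take k.-1 c, true).

Definition fifo_step {T : eqType} (k : nat) (c : seq T) (p : T) : seq T * bool :=
  if p \in c then (c, false)
  else if (size c < k)%N then (p :: c, true) else (p :: take k.-1 c, true).

Fixpoint faults_from {T : eqType} (step : seq T -> T -> seq T * bool)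
    (c : seq T) (I : seq T) : nat :=
  match I with
  | [::] => 0%N
  | p :: I' => let (c', f) := step c p in (f + faults_from step c' I')%N
  end.

Definition LRU {T : eqType} (k : nat) (I : seq T) : nat := faults_from (lru_step k) [::] I.
Definition FIFO {T : eqType} (k : nat) (I : seq T) : nat := faults_from (fifo_step k) [::] I.

Definition respects {T : finType} (G : rel T) (I : seq T) : bool :=
  sorted (fun x y => (x == y) || G x y) I.

(* Min_{A,B}(n,G) and Max_{A,B}(n,G) as reals (the sets are finite and,
   for nonempty T, nonempty) *)
Definition MinAB {R : realType} {T : finType} (A B : seq T -> nat) (G : rel T)
    (n : nat) : R :=
  inf [set ((A I)%:R - (B I)%:R : R) | I in [set I : seq T | size I = n /\ respects G I]].
Definition MaxAB {R : realType} {T : finType} (A B : seq T -> nat) (G : rel T)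
    (n : nat) : R :=
  sup [set ((A I)%:R - (B I)%:R : R) | I in [set I : seq T | size I = n /\ respects G I]].

Definition MinG {R : realType} {T : finType} (A B : seq T -> nat) (G : rel T) : R :=
  limn_inf (fun n => MinAB A B G n / n%:R).
Definition MaxG {R : realType} {T : finType} (A B : seq T -> nat) (G : rel T) : R :=
  limn_sup (fun n => MaxAB A B G n / n%:R).

From HB Require Import structures.
From mathcomp Require Import all_boot all_order all_algebra.
From mathcomp Require Import all_classical all_reals all_analysis.
From mathcomp Require Import zify.
From mathcomp.algebra_tactics Require Import ring lra.
Set Implicit Arguments. Unset Strict Implicit. Unset Printing Implicit Defensive.
Import Order.TTheory GRing.Theory Num.Theory.

(* Run FIFO and LRU side by side on the same requests, with FIFO cache C
   (newest first) and LRU cache L (most recent first), and amortize.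
   For the upper bound, let D count the pages q of L that are not in C or
   have a page ahead of them in C that is not ahead of them in L, and let r
   be the position in C of the first page missing from L; the potential
   (k-1) D + (k - r) gives (2k-1) FIFO <= (2k-1) LRU + (k-1) n + k.
   For the lower bound, the position s in L of the first page missing from
   C and the potential k - s give k LRU <= k FIFO + (k-1) n + k.  Dividing by
   n = |I| yields both bounds; these hold for all request sequences. *)

Local Open Scope nat_scope.

Section SeqFacts.
Variable T : eqType.
Implicit Types (s t : seq T) (a : pred T).

Lemma sub_in_count a1 a2 s :
  {in s, forall x, a1 x -> a2 x} -> count a1 s <= count a2 s.
Proof.
move=> sub12; have eq_a : {in s, a1 =1 predI a1 a2}.
  by move=> x /sub12; rewrite /=; case: (a1 x) => // ->.
by rewrite (eq_in_count eq_a); apply: sub_count => x /andP[].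
Qed.

Lemma find_take a s m : find a (take m s) = minn (find a s) m.
Proof.
elim: s m => [|x s IH] [|m] //=; rewrite ?min0n ?minn0 //.
by case: (a x); rewrite ?IH ?minnSS.
Qed.

Lemma find_rem a s x : ~~ a x -> find a s <= (find a (rem x s)).+1.
Proof.
move=> ax; elim: s => [//|y s IH] /=.
by case: (eqVneq y x) => [->|_ /=]; [rewrite (negbTE ax)|case: (a y)].
Qed.

Definition first_missing s t := find (fun y => y \notin t) s.

Lemma first_missing_le_size s t : first_missing s t <= size s.
Proof. exact: find_size. Qed.

Lemma first_missing_lt s t x :
  uniq s -> x \in t -> x \notin s -> first_missing s t < size t.
Proof.
move=> us xt xs; set m := first_missing s t.
have ht : ~~ has (fun y => y \notin t) (take m s).
  by apply/negP => /find_ltn; rewrite ltnn.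
have sub : {subset x :: take m s <= t}.
  move=> y; rewrite in_cons => /orP[/eqP-> //|ys].
  by apply: contraR ht => yt; apply/hasP; exists y.
have uxs : uniq (x :: take m s).
  by rewrite /= take_uniq // andbT; apply: contra xs; apply: mem_take.
have := uniq_leq_size uxs sub; rewrite /= size_takel //; exact: find_size.
Qed.

Definition ahead s x := take (index x s) s.

Lemma size_ahead s x : size (ahead s x) = index x s.
Proof. by rewrite size_takel // index_size. Qed.

Lemma ahead_uniq s x : uniq s -> uniq (ahead s x).
Proof. exact: take_uniq. Qed.

Lemma ahead_cons_self s x : ahead (x :: s) x = [::].
Proof. by rewrite /ahead /= eqxx. Qed.

Lemma ahead_cons s x y : y != x -> ahead (x :: s) y = x :: ahead s y.
Proof. by move=> yx; rewrite /ahead /= eq_sym (negbTE yx). Qed.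

Lemma ahead_take s m x : x \in take m s -> ahead (take m s) x = ahead s x.
Proof.
move=> xt; have idx : index x (take m s) = index x s.
  by rewrite -{2}(cat_take_drop m s) index_cat xt.
by rewrite /ahead idx take_takel // ltnW // (index_ltn xt).
Qed.

Lemma mem_ahead_rem s x y z : uniq s -> y != x ->
  (z \in ahead (rem x s) y) = (z != x) && (z \in ahead s y).
Proof.
move=> + yx; elim: s => [|w s IH /andP[ws us]] /=; first by rewrite andbF.
case: (eqVneq w x) => [wx|wx].
  rewrite -wx in yx ws *; rewrite ahead_cons // in_cons.
  case: (eqVneq z w) => [->|] //=; apply/negbTE; apply: contra ws.
  exact: mem_take.
case: (eqVneq y w) => [->|yw]; first by rewrite !ahead_cons_self andbF.
by rewrite !ahead_cons // !in_cons IH //; case: (eqVneq z w) => [->|]; rewrite ?wx.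
Qed.

End SeqFacts.

Section Caches.
Variables (T : eqType) (k : nat).
Hypothesis k_gt0 : 0 < k.
Implicit Types (C L I : seq T) (p q : T).

Definition cache_ok C := uniq C && (size C <= k).

Definition fifo_next C p := if p \in C then C else p :: take k.-1 C.
Definition lru_next L p := p :: (if p \in L then rem p L else take k.-1 L).

Lemma cache_ok_cons_take C p :
  uniq C -> p \notin C -> cache_ok (p :: take k.-1 C).
Proof.
move=> uC pC; rewrite /cache_ok /= take_uniq // andbT size_take_min.
by rewrite (contra (@mem_take _ _ _ _) pC); lia.
Qed.

Lemma cache_ok_fifo_next C p : cache_ok C -> cache_ok (fifo_next C p).
Proof.
move=> okC; rewrite /fifo_next; case: ifPn => // pC.
by case/andP: okC => uC _; apply: cache_ok_cons_take.
Qed.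

Lemma cache_ok_lru_next L p : cache_ok L -> cache_ok (lru_next L p).
Proof.
case/andP=> uL sL; rewrite /lru_next; case: ifPn => pL; last exact: cache_ok_cons_take.
rewrite /cache_ok /= mem_rem_uniqF // rem_uniq //= size_rem //; lia.
Qed.

Lemma fifo_stepE C p :
  size C <= k -> fifo_step k C p = (fifo_next C p, p \notin C).
Proof.
move=> sC; rewrite /fifo_step /fifo_next; case: ifP => // _.
by case: ifP => // lt_Ck; rewrite take_oversize //; lia.
Qed.

Lemma lru_stepE L p :
  size L <= k -> lru_step k L p = (lru_next L p, p \notin L).
Proof.
move=> sL; rewrite /lru_step /lru_next; case: ifP => // _.
by case: ifP => // lt_Lk; rewrite take_oversize //; lia.
Qed.

Lemma amortized_faults (a1 a2 b1 b2 c : nat) (Phi : seq T -> seq T -> nat) :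
  (forall C L p, cache_ok C -> cache_ok L ->
     a1 * (p \notin C) + a2 * (p \notin L) + Phi (fifo_next C p) (lru_next L p)
       <= Phi C L + b1 * (p \notin C) + b2 * (p \notin L) + c) ->
  forall I, a1 * FIFO k I + a2 * LRU k I
              <= Phi [::] [::] + b1 * FIFO k I + b2 * LRU k I + c * size I.
Proof.
move=> amortized_step I; rewrite /FIFO /LRU.
suff from_ok C L : cache_ok C -> cache_ok L ->
    a1 * faults_from (fifo_step k) C I + a2 * faults_from (lru_step k) L I
      <= Phi C L + b1 * faults_from (fifo_step k) C I
           + b2 * faults_from (lru_step k) L I + c * size I by exact: from_ok.
elim: I C L => [|p I IH] C L okC okL /=; first by lia.
have [/andP[_ sC] /andP[_ sL]] := (okC, okL).
rewrite fifo_stepE // lru_stepE //.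
have := amortized_step C L p okC okL.
have := IH _ _ (cache_ok_fifo_next p okC) (cache_ok_lru_next p okL).
rewrite !mulnDr; lia.
Qed.

Definition in_order C L q :=
  (q \in C) && all (fun y => y \in ahead L q) (ahead C q).

Definition disorder C L := count (predC (in_order C L)) L.

Lemma mem_lru_next L p : p \in L -> lru_next L p =i L.
Proof. by move=> pL y; rewrite /lru_next pL -(perm_mem (perm_to_rem pL)). Qed.

Lemma mem_ahead_lru_next L p q z : uniq L -> q != p -> q \in lru_next L p ->
  (z \in ahead (lru_next L p) q) = (z == p) || (z \in ahead L q).
Proof.
move=> uL qp; rewrite /lru_next in_cons (negbTE qp) /= ahead_cons // in_cons.
case: ifPn => _ qL; last by rewrite ahead_take.
by rewrite mem_ahead_rem //; case: eqP.
Qed.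

Lemma in_order_next C L p q :
  cache_ok C -> cache_ok L -> q != p -> q \in lru_next L p ->
  in_order C L q -> in_order (fifo_next C p) (lru_next L p) q.
Proof.
move=> /andP[uC _] okL qp qL' /andP[qC /allP CL].
have /andP[_ sL'] := cache_ok_lru_next p okL.
have uL : uniq L by case/andP: okL.
have p_ahead : p \in ahead (lru_next L p) q by rewrite ahead_cons // mem_head.
have sub : {subset ahead C q <= ahead (lru_next L p) q}.
  by move=> y /CL yL; rewrite mem_ahead_lru_next // yL orbT.
rewrite /in_order /fifo_next; case: ifPn => pC; first by rewrite qC; apply/allP.
have q_take : q \in take k.-1 C.
  have u : uniq (p :: ahead C q).
    by rewrite /= ahead_uniq // andbT; apply: contra pC; apply: mem_take.
  have sub' : {subset p :: ahead C q <= ahead (lru_next L p) q}.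
    by move=> y; rewrite in_cons => /orP[/eqP-> //|/sub].
  have := uniq_leq_size u sub'; rewrite /= !size_ahead.
  by move: qL'; rewrite -index_mem in_take //; lia.
rewrite in_cons q_take orbT /=; apply/allP => y.
by rewrite ahead_cons // in_cons ahead_take // => /orP[/eqP-> //|/sub].
Qed.

Lemma count_lru_next_tail L p (a : pred T) :
  (p \in L) && a p + count a (behead (lru_next L p)) <= count a L.
Proof.
rewrite /lru_next /=; case: ifPn => pL /=.
  by rewrite (permP (perm_to_rem pL) a) /=.
exact: leq_count_subseq (take_subseq L k.-1).
Qed.

Lemma disorder_step C L p : cache_ok C -> cache_ok L ->
  (p \notin C) && (p \in L) + disorder (fifo_next C p) (lru_next L p)
    <= disorder C L + (p \in C).
Proof.
move=> okC okL.
have p_tail : p \notin behead (lru_next L p).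
  by have /andP[+ _] := cache_ok_lru_next p okL; rewrite /lru_next /= => /andP[].
have tail : count (predC (in_order (fifo_next C p) (lru_next L p))) (behead (lru_next L p))
            <= count (predC (in_order C L)) (behead (lru_next L p)).
  apply: sub_in_count => q qt; apply: contra; apply: in_order_next => //.
    exact: (memPn p_tail).
  by rewrite /lru_next in_cons qt orbT.
have head : ~~ in_order (fifo_next C p) (lru_next L p) p <= (p \in C).
  rewrite /fifo_next; case: ifPn => _; first by case: in_order.
  by rewrite /in_order mem_head ahead_cons_self.
have bad_p : p \notin C -> ~~ in_order C L p by apply: contra => /andP[].
have := count_lru_next_tail L p (predC (in_order C L)).
move: tail head bad_p; rewrite /disorder {3}/lru_next /=.
by case: (p \in C); case: (p \in L) => /=; lia.
Qed.

Lemma first_missing_fifo_next C L p : cache_ok C -> cache_ok L ->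
  (p \notin C) && (p \in L) + first_missing C L
    <= first_missing (fifo_next C p) (lru_next L p) + (p \notin L) * k.-1.
Proof.
move=> /andP[uC sC] /andP[uL sL].
have := first_missing_le_size C L.
rewrite /fifo_next; case: (boolP (p \in L)) => pL /=.
  have same_L s : first_missing s (lru_next L p) = first_missing s L.
    by apply: eq_find => y; rewrite /= mem_lru_next.
  rewrite same_L; case: ifPn => pC /=; first by lia.
  have := first_missing_lt uC pL pC.
  by rewrite /first_missing /= pL /= find_take; lia.
case: ifPn => pC.
  have : has (fun y => y \notin L) C by apply/hasP; exists p.
  by rewrite has_find -/(first_missing C L); lia.
by rewrite /first_missing /= /lru_next mem_head /=; lia.
Qed.

Lemma first_missing_lru_next C L p : cache_ok C -> cache_ok L ->
  (p \in C) && (p \notin L) + first_missing L C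
    <= first_missing (lru_next L p) (fifo_next C p) + (p \notin C) * k.-1.
Proof.
move=> /andP[uC sC] /andP[uL sL].
have := first_missing_le_size L C.
rewrite /fifo_next /first_missing; case: ifPn => pC /=; last first.
  by rewrite /lru_next /= mem_head /=; lia.
rewrite /lru_next /= pC /=; case: ifPn => pL /=.
  by have := @find_rem _ (fun y => y \notin C) L p; rewrite /= negbK pC => /(_ isT); lia.
have := first_missing_lt uL pC pL.
by rewrite find_take /first_missing; lia.
Qed.

Lemma first_missing_le C L : cache_ok C -> first_missing C L <= k.
Proof. by case/andP=> _ sC; apply: leq_trans (first_missing_le_size C L) sC. Qed.

Lemma FIFO_LRU_max I :
  (k + k.-1) * FIFO k I <= k + (k + k.-1) * LRU k I + k.-1 * size I.
Proof.
pose Phi C L := k.-1 * disorder C L + (k - first_missing C L).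
have step C L p : cache_ok C -> cache_ok L ->
    (k + k.-1) * (p \notin C) + 0 * (p \notin L) + Phi (fifo_next C p) (lru_next L p)
      <= Phi C L + 0 * (p \notin C) + (k + k.-1) * (p \notin L) + k.-1.
  move=> okC okL; rewrite /Phi.
  have := leq_mul (leqnn k.-1) (disorder_step p okC okL); rewrite !mulnDr.
  have := first_missing_fifo_next p okC okL.
  have := first_missing_le L okC.
  have := first_missing_le (lru_next L p) (cache_ok_fifo_next p okC).
  by case: (p \in C); case: (p \in L) => /=; lia.
by have := amortized_faults step I; rewrite /Phi /disorder /first_missing /=; lia.
Qed.

Lemma FIFO_LRU_min I : k * LRU k I <= k + k * FIFO k I + k.-1 * size I.
Proof.
pose Phi C L := k - first_missing L C.
have step C L p : cache_ok C -> cache_ok L ->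
    0 * (p \notin C) + k * (p \notin L) + Phi (fifo_next C p) (lru_next L p)
      <= Phi C L + k * (p \notin C) + 0 * (p \notin L) + k.-1.
  move=> okC okL; rewrite /Phi.
  have := first_missing_lru_next p okC okL.
  have := first_missing_le C okL.
  have := first_missing_le (fifo_next C p) (cache_ok_lru_next p okL).
  by case: (p \in C); case: (p \in L) => /=; lia.
by have := amortized_faults step I; rewrite /Phi /first_missing /=; lia.
Qed.

End Caches.

Local Open Scope ring_scope.
Local Open Scope classical_set_scope.

Section LimnSupInf.
Variable R : realType.
Implicit Types (u : R^nat) (c : R).

Lemma bounded_fun_norm_le u (M : R) : (forall n, `|u n| <= M) -> bounded_fun u.
Proof.
move=> uM; apply/ex_bound; last by exists M => n _; apply: uM.
exact: (@globally_properfilter _ _ 0%N).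
Qed.

Lemma limn_sup_le u c : bounded_fun u ->
  (forall e, 0 < e -> \forall n \near \oo, u n <= c + e) -> limn_sup u <= c.
Proof.
move=> bu ule; rewrite limn_supE //; apply/ler_addgt0Pr => e /ule[N _ uN].
apply: (@le_trans _ _ (sups u N)).
  by apply: ge_inf; [exact: bounded_fun_has_lbound_sups | exists N].
apply: ge_sup; first by exists (u N), N => /=.
by move=> _ [m /= Nm <-]; apply: uN.
Qed.

Lemma limn_inf_ge u c : bounded_fun u ->
  (forall e, 0 < e -> \forall n \near \oo, c - e <= u n) -> c <= limn_inf u.
Proof.
move=> bu ule; rewrite limn_infE //; apply/ler_addgt0Pr => e /ule[N _ uN].
rewrite -lerBlDr; apply: (@le_trans _ _ (infs u N)).
  apply: lb_le_inf; first by exists (u N), N => /=.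
  by move=> _ [m /= Nm <-]; apply: uN.
by apply: ub_le_sup; [exact: bounded_fun_has_ubound_infs | exists N].
Qed.

Lemma norm_div_natr_le1 (x : R) n : `|x| <= n%:R -> `|x / n%:R| <= 1.
Proof.
case: n => [|n] xn; first by rewrite invr0 mulr0 normr0.
by rewrite normrM normfV normr_nat ler_pdivrMr ?ltr0n // mul1r.
Qed.

End LimnSupInf.

Lemma faults_from_le_size (T : eqType) (step : seq T -> T -> seq T * bool) c I :
  (faults_from step c I <= size I)%N.
Proof.
elim: I c => [//|p I IH] c /=; case: (step c p) => c' f.
by have := IH c'; case: f => /=; lia.
Qed.

Lemma respects_nseq (T : finType) (G : rel T) n t : respects G (nseq n t).
Proof. by rewrite /respects; elim: n => [|[|n] IH] //=; rewrite eqxx. Qed.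

Section RelativeInterval.
Variables (R : realType) (T : finType) (G : rel T) (A B : seq T -> nat) (t : T).
Hypotheses (A_le_size : forall I, (A I <= size I)%N)
           (B_le_size : forall I, (B I <= size I)%N).

Let gap I : R := (A I)%:R - (B I)%:R.

Lemma gap_bounds I : - (size I)%:R <= gap I <= (size I)%:R.
Proof.
have := A_le_size I; have := B_le_size I; rewrite -!(ler_nat R) /gap.
by have := ler0n R (A I); have := ler0n R (B I); lra.
Qed.

Lemma MinAB_ge n x :
  (forall I, size I = n -> respects G I -> x <= gap I) -> x <= MinAB A B G n.
Proof.
move=> x_le; apply: lb_le_inf; first by exists (gap (nseq n t)), (nseq n t);
  rewrite //= size_nseq respects_nseq.
by move=> _ [I [sI rI] <-]; apply: x_le.
Qed.

Lemma MaxAB_le n x :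
  (forall I, size I = n -> respects G I -> gap I <= x) -> MaxAB A B G n <= x.
Proof.
move=> le_x; apply: ge_sup; first by exists (gap (nseq n t)), (nseq n t);
  rewrite //= size_nseq respects_nseq.
by move=> _ [I [sI rI] <-]; apply: le_x.
Qed.

Lemma MinAB_le I : respects G I -> MinAB A B G (size I) <= gap I.
Proof.
move=> rI; apply: ge_inf; last by exists I.
exists (- (size I)%:R) => _ [J [sJ _] <-].
by rewrite -sJ; case/andP: (gap_bounds J).
Qed.

Lemma MaxAB_ge I : respects G I -> gap I <= MaxAB A B G (size I).
Proof.
move=> rI; apply: ub_le_sup; last by exists I.
exists (size I)%:R => _ [J [sJ _] <-].
by rewrite -sJ; case/andP: (gap_bounds J).
Qed.

Lemma norm_MinAB_le n : `|MinAB A B G n : R| <= n%:R.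
Proof.
rewrite ler_norml MinAB_ge => [|I <- _]; last by case/andP: (gap_bounds I).
have := MinAB_le (respects_nseq G n t); rewrite size_nseq => /le_trans; apply.
by case/andP: (gap_bounds (nseq n t)); rewrite size_nseq.
Qed.

Lemma norm_MaxAB_le n : `|MaxAB A B G n : R| <= n%:R.
Proof.
rewrite ler_norml MaxAB_le ?andbT => [|I <- _]; last by case/andP: (gap_bounds I).
have := MaxAB_ge (respects_nseq G n t); rewrite size_nseq; apply: le_trans.
by case/andP: (gap_bounds (nseq n t)); rewrite size_nseq.
Qed.

Lemma MinG_ge c K :
  (forall I, (0 < size I)%N -> respects G I -> c * (size I)%:R - K <= gap I) ->
  c <= MinG A B G.
Proof.
move=> le_gap; apply: limn_inf_ge => [|e e_gt0].
  by apply: (@bounded_fun_norm_le _ _ 1) => n; apply/norm_div_natr_le1/norm_MinAB_le.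
near=> n.
have n_gt0 : (0 < n)%N by near: n; exact: nbhs_infty_gt.
have Kn : K / e <= n%:R by near: n; exact: nbhs_infty_ger.
rewrite ler_pdivlMr ?ltr0n // mulrBl; apply: MinAB_ge => I sI rI.
apply: le_trans (le_gap I _ rI); rewrite sI //.
by rewrite lerD2l lerN2 mulrC -ler_pdivrMr.
Unshelve. all: by end_near.
Qed.

Lemma MaxG_le c K :
  (forall I, (0 < size I)%N -> respects G I -> gap I <= c * (size I)%:R + K) ->
  MaxG A B G <= c.
Proof.
move=> gap_le; apply: limn_sup_le => [|e e_gt0].
  by apply: (@bounded_fun_norm_le _ _ 1) => n; apply/norm_div_natr_le1/norm_MaxAB_le.
near=> n.
have n_gt0 : (0 < n)%N by near: n; exact: nbhs_infty_gt.
have Kn : K / e <= n%:R by near: n; exact: nbhs_infty_ger.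
rewrite ler_pdivrMr ?ltr0n // mulrDl; apply: MaxAB_le => I sI rI.
apply: le_trans (gap_le I _ rI) _; rewrite sI //.
by rewrite lerD2l mulrC -ler_pdivrMr.
Unshelve. all: by end_near.
Qed.

End RelativeInterval.

Lemma FIFO_sub_LRU_le (R : realType) (T : eqType) k (I : seq T) : (0 < k)%N ->
  (FIFO k I)%:R - (LRU k I)%:R
    <= (2^-1 - ((4 * k - 2)%N%:R : R)^-1) * (size I)%:R + k%:R / (2 * k - 1)%:R.
Proof.
case: k => // j _; have := FIFO_LRU_max (ltn0Sn j) I.
have -> : (4 * j.+1 - 2 = 2 * (2 * j + 1))%N by lia.
have -> : (2 * j.+1 - 1 = 2 * j + 1)%N by lia.
rewrite -(ler_nat R) [j.+1.-1]/= -addn1 !(natrD, natrM).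
set J := j%:R; set F := (FIFO _ I)%:R; set L := (LRU _ I)%:R; set n := (size I)%:R.
have J_ge0 : 0 <= J by apply: ler0n.
have -> : 2^-1 - (2 * (2 * J + 1))^-1 = J / (2 * J + 1) by field; lra.
rewrite mulrAC -mulrDl ler_pdivlMr; last by lra.
nra.
Qed.

Lemma FIFO_sub_LRU_ge (R : realType) (T : eqType) k (I : seq T) : (0 < k)%N ->
  (-1 + (k%:R : R)^-1) * (size I)%:R - 1 <= (FIFO k I)%:R - (LRU k I)%:R.
Proof.
case: k => // j _; have := FIFO_LRU_min (ltn0Sn j) I.
rewrite -(ler_nat R) [j.+1.-1]/= -addn1 !(natrD, natrM).
set J := j%:R; set F := (FIFO _ I)%:R; set L := (LRU _ I)%:R; set n := (size I)%:R.
have J_ge0 : 0 <= J by apply: ler0n.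
have -> : (-1 + (J + 1)^-1) * n - 1 = - (J * n + J + 1) / (J + 1) by field; lra.
rewrite ler_pdivrMr; last by lra.
nra.
Qed.

Theorem lemma4 (R : realType) (T : finType) (G : rel T) (k : nat) :
  (0 < k)%N -> symmetric G -> (0 < #|T|)%N ->
  -1 + (k%:R : R)^-1 <= MinG (FIFO k) (LRU k) G /\
  MaxG (FIFO k) (LRU k) G <= 2^-1 - ((4 * k - 2)%N%:R : R)^-1.
Proof.
move=> k_gt0 _ /card_gt0P[t _].
have FIFO_le (I : seq T) : (FIFO k I <= size I)%N by apply: faults_from_le_size.
have LRU_le (I : seq T) : (LRU k I <= size I)%N by apply: faults_from_le_size.
split.
- apply: (MinG_ge t FIFO_le LRU_le (K := 1)) => I _ _.
  exact: FIFO_sub_LRU_ge.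
- apply: (MaxG_le t FIFO_le LRU_le (K := k%:R / (2 * k - 1)%:R)) => I _ _.
  exact: FIFO_sub_LRU_le.
Qed.
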